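(* Let $\Sigma$ be a non-empty finite or countably infinite alphabet and $\mu$ a probability map over $\Sigma$. If there exists a $\mu$-distributed sequence $\alpha\in\Sigma^\omega$, then $\mu$ is invariant, i.e. for every $w\in\Sigma^*$, $\sum_{a\in\Sigma}\mu(wa)=\mu(w)$ and $\sum_{a\in\Sigma}\mu(aw)=\mu(w)$.
   Context: A probability map over $\Sigma$ is $\mu:\Sigma^+\to[0,1]$ with $\sum_{w\in\Sigma^n}\mu(w)=1$ for every $n\ge1$, with the convention $\mu(\lambda)=1$ for the empty word $\lambda$. $\alpha$ is $\mu$-distributed if for every $w\in\Sigma^+$, $\lim_{N\to\infty}\#_w(\alpha|_{\le N})/N=\mu(w)$, where $\alpha|_{\le N}$ is the length-$N$ prefix and $\#_w(v)$ counts (possibly overlapping) occurrences of $w$ as a contiguous block in $v$. *)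

From HB Require Import structures.
From mathcomp Require Import all_boot all_order all_algebra.
From mathcomp Require Import all_classical all_reals all_analysis.
Set Implicit Arguments. Unset Strict Implicit. Unset Printing Implicit Defensive.
Import Order.TTheory GRing.Theory Num.Theory.
Local Open Scope classical_set_scope.
Local Open Scope ring_scope.
Import numFieldNormedType.Exports.

(* A probability map over Sigma: mu : Sigma^* -> [0,1] (its values on the
   non-empty words are the meaningful ones), with mu(lambda) = 1 by
   convention, and for every n >= 1 the (possibly infinite, non-negative)
   sum of mu over all words of length n is 1. *)
Definition prob_map (R : realType) (Sigma : countType)
  (mu : seq Sigma -> R) : Prop :=
  mu [::] = 1 /\
  (forall w : seq Sigma, 0 <= mu w <= 1) /\
  (forall n : nat, (1 <= n)%N ->
     (\esum_(w in [set w : seq Sigma | size w = n]) (mu w)%:E = 1%E)%E).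

Definition seq_prefix (Sigma : Type) (alpha : nat -> Sigma) (N : nat) : seq Sigma :=
  [seq alpha i | i <- iota 0 N].

Definition occ_count (Sigma : eqType) (w v : seq Sigma) : nat :=
  count (fun i => take (size w) (drop i v) == w) (iota 0 (size v - size w).+1).

Definition mu_distributed (R : realType) (Sigma : countType)
  (mu : seq Sigma -> R) (alpha : nat -> Sigma) : Prop :=
  forall w : seq Sigma, w != [::] ->
    ((occ_count w (seq_prefix alpha N))%:R / N%:R : R) @[N --> \oo] --> (mu w : R^o).

Definition mu_invariant (R : realType) (Sigma : countType)
  (mu : seq Sigma -> R) : Prop :=
  forall w : seq Sigma,
    (\esum_(a in [set: Sigma]) (mu (rcons w a))%:E = (mu w)%:E)%E /\
    (\esum_(a in [set: Sigma]) (mu (a :: w))%:E = (mu w)%:E)%E.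

From mathcomp Require Import all_boot all_order all_algebra.
From mathcomp Require Import all_classical all_reals all_analysis.
From mathcomp Require Import zify.
Set Implicit Arguments. Unset Strict Implicit. Unset Printing Implicit Defensive.
Import Order.TTheory GRing.Theory Num.Theory.
Import numFieldNormedType.Exports.
Local Open Scope classical_set_scope.

(* For distinct letters a, every occurrence of w.a (or a.w) in
      a prefix of alpha yields an occurrence of w, and different letters give
      different occurrences; hence sum_a #(w.a) <= #w and sum_a #(a.w) <= #w
      (Section Occurrences).
   2. Limits.  Dividing by N and letting N -> oo turns these into
      sum_(a in F) mu(w.a) <= mu(w) for every finite set F of letters, so the
      (possibly infinite) sums satisfy sum_a mu(w.a) <= mu(w), sum_a mu(a.w)
      <= mu(w) for non-empty w (mu_extensions_le).
   3. Mass.  Words of length n+1 are exactly the w.a (resp. a.w) with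
      |w| = n, so sum_(|w|=n) sum_a mu(w.a) = 1 = sum_(|w|=n) mu(w).  A
      pointwise inequality between non-negative families with equal finite
      totals is an equality (esum_eq_of_le), which gives invariance for
      |w| >= 1; the empty word is the case n = 0 of the same regrouping. *)

Section Occurrences.
Variables (S : eqType) (alpha : nat -> S).

Definition occurs_at (w : seq S) (N i : nat) : bool :=
  (i + size w <= N) && ([seq alpha k | k <- iota i (size w)] == w).

Lemma occ_countE w N :
  occ_count w (seq_prefix alpha N) = count (occurs_at w N) (iota 0 N.+1).
Proof.
rewrite /occ_count /seq_prefix size_map size_iota.
case: (leqP (size w) N) => hw.
  have -> : N.+1 = (N - size w).+1 + size w by rewrite addSn subnK.
  rewrite iotaD count_cat.
  have -> : count (occurs_at w N) (iota (0 + (N - size w).+1) (size w)) = 0.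
    apply/eqP; rewrite -leqn0 leqNgt -has_count; apply/hasPn => i.
    rewrite mem_iota add0n /occurs_at => /andP[i_fits _]; apply/nandP; left.
    rewrite -ltnNge; lia.
  rewrite addn0; apply: eq_in_count => i; rewrite mem_iota add0n ltnS => /= hi.
  rewrite /occurs_at (_ : i + size w <= N); last by lia.
  rewrite /= -map_drop drop_iota -map_take take_iota add0n.
  by congr (map _ (iota _ _) == _); apply/minn_idPl; lia.
have no_occ : occurs_at w N =1 pred0.
  by move=> i /=; apply/negbTE/nandP; left; rewrite -ltnNge; lia.
have -> : N - size w = 0 by apply/eqP; rewrite subn_eq0 ltnW.
rewrite (eq_count no_occ) count_pred0 /= drop0.
rewrite take_oversize ?size_map ?size_iota ?(ltnW hw) //.
have prefix_neq : ([seq alpha i | i <- iota 0 N] == w) = false.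
  by apply/negbTE/eqP => E; move: hw; rewrite -E size_map size_iota ltnn.
by rewrite prefix_neq.
Qed.

Lemma sum_eq_uniq_le (c : bool) (b : S) (s : seq S) : uniq s ->
  (\sum_(a <- s) (c && (b == a)) <= c)%N.
Proof.
move=> s_uniq; case: c; last by rewrite big1.
have -> : (\sum_(a <- s) (true && (b == a)) = count_mem b s)%N.
  by elim: s {s_uniq} => [|x s IH]; rewrite ?big_nil ?big_cons //= IH eq_sym.
by rewrite count_uniq_mem // leq_b1.
Qed.

Lemma sum_count_le (I : Type) (s : seq I) (p : I -> pred nat) (q : pred nat)
    (l : seq nat) :
  (forall i, \sum_(a <- s) p a i <= q i)%N ->
  (\sum_(a <- s) count (p a) l <= count q l)%N.
Proof.
move=> pq; elim: l => [|i l IH]; first by rewrite big1.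
by rewrite /= big_split /= addnC [X in (_ <= X)%N]addnC leq_add.
Qed.

(* An occurrence of w.a at i is an occurrence of w at i followed by a. *)
Lemma occurs_at_rcons_le w N i (s : seq S) : uniq s ->
  (\sum_(a <- s) occurs_at (rcons w a) N i <= occurs_at w N i)%N.
Proof.
move=> s_uniq.
have E a : occurs_at (rcons w a) N i =
    (occurs_at w N i && (i + size w < N)) && (alpha (i + size w) == a).
  rewrite /occurs_at size_rcons -addn1 iotaD map_cat cats1 eqseq_rcons.
  rewrite addnA addn1.
  by case: (ltnP (i + size w) N) => [/ltnW ->|]; rewrite /= ?andbT ?andbF // andbC.
under eq_bigr do rewrite E.
apply: leq_trans (sum_eq_uniq_le _ _ s_uniq) _.
by case: (occurs_at w N i); rewrite ?leq_b1.
Qed.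

(* An occurrence of a.w at i is the letter a followed by an occurrence of w
   at i+1. *)
Lemma occurs_at_cons_le w N i (s : seq S) : uniq s ->
  (\sum_(a <- s) occurs_at (a :: w) N i <= occurs_at w N i.+1)%N.
Proof.
move=> s_uniq.
have E a : occurs_at (a :: w) N i = occurs_at w N i.+1 && (alpha i == a).
  by rewrite /occurs_at /= eqseq_cons addnS addSn andbA andbAC.
under eq_bigr do rewrite E.
exact: sum_eq_uniq_le.
Qed.

Lemma occ_count_rcons_le w N (s : seq S) : uniq s ->
  (\sum_(a <- s) occ_count (rcons w a) (seq_prefix alpha N)
     <= occ_count w (seq_prefix alpha N))%N.
Proof.
move=> s_uniq; under eq_bigr do rewrite occ_countE.
by rewrite occ_countE; apply: sum_count_le => i; exact: occurs_at_rcons_le.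
Qed.

(* The same for left extensions; shifting positions by one loses nothing
   since no occurrence starts after N. *)
Lemma occ_count_cons_le w N (s : seq S) : uniq s ->
  (\sum_(a <- s) occ_count (a :: w) (seq_prefix alpha N)
     <= occ_count w (seq_prefix alpha N))%N.
Proof.
move=> s_uniq; under eq_bigr do rewrite occ_countE.
apply: leq_trans (sum_count_le _ (fun i => occurs_at_cons_le w N i s_uniq)) _.
have -> : count (fun i => occurs_at w N i.+1) (iota 0 N.+1)
          = count (occurs_at w N) (iota 1 N.+1).
  by rewrite (iotaDl 1 0) count_map; apply: eq_count => i; rewrite /= add1n.
rewrite occ_countE -(addn1 N) iotaD count_cat /= add1n addn1.
have -> : occurs_at w N N.+1 = false by rewrite /occurs_at leqNgt ltnS leq_addr.
by rewrite /=; lia.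
Qed.

End Occurrences.

Local Open Scope ring_scope.

Lemma freq_sum_le (R : realType) (I : Type) (s : seq I)
    (f : I -> nat -> nat) (g : nat -> nat) (m : I -> R) (l : R) :
  (forall a, (f a N)%:R / N%:R @[N --> \oo] --> (m a : R^o)) ->
  (g N)%:R / N%:R @[N --> \oo] --> (l : R^o) ->
  (forall N, \sum_(a <- s) f a N <= g N)%N ->
  \sum_(a <- s) m a <= l.
Proof.
move=> f_cvg g_cvg fg.
have sum_cvg : (\sum_(a <- s) (f a N)%:R / N%:R) @[N --> \oo]
                 --> (\sum_(a <- s) m a : R^o).
  by apply: cvg_big => //; exact: add_continuous.
apply: (ler_cvg_to sum_cvg g_cvg); apply: nearW => N.
by rewrite -mulr_suml ler_wpM2r ?invr_ge0 ?ler0n // -natr_sum ler_nat.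
Qed.

Local Open Scope ereal_scope.

Lemma mu_extensions_le (R : realType) (Sigma : countType) (mu : seq Sigma -> R)
    (alpha : nat -> Sigma) (w : seq Sigma) :
  mu_distributed mu alpha -> w != [::] ->
  \esum_(a in [set: Sigma]) (mu (rcons w a))%:E <= (mu w)%:E /\
  \esum_(a in [set: Sigma]) (mu (a :: w))%:E <= (mu w)%:E.
Proof.
move=> alpha_distributed w_nil.
have rcons_nil a : rcons w a != [::] by case: (w).
split; apply: ge_ereal_sup => _ [X [finX _] <-];
  rewrite fsbig_finite // sumEFin lee_fin.
- apply: (freq_sum_le (fun a => alpha_distributed _ (rcons_nil a))
    (alpha_distributed _ w_nil)) => N.
  exact: occ_count_rcons_le (finmap.fset_uniq _).
- apply: (freq_sum_le (fun a => alpha_distributed _ (isT : a :: w != [::]))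
    (alpha_distributed _ w_nil)) => N.
  exact: occ_count_cons_le (finmap.fset_uniq _).
Qed.

Lemma esum_eq_of_le (R : realType) (T : choiceType) (I : set T)
    (f g : T -> \bar R) (i : T) :
  (forall j, I j -> 0 <= f j <= g j) ->
  \esum_(j in I) f j = \esum_(j in I) g j -> \esum_(j in I) g j \is a fin_num ->
  I i -> f i = g i.
Proof.
move=> fg sum_eq sum_fin Ii.
have f0 j : I j -> 0 <= f j by move=> /fg /andP[].
have g0 j : I j -> 0 <= g j by move=> /fg /andP[/le_trans]; apply.
have Ii_eq : I `&` [set i] = [set i] by apply: setIidr => j ->.
move: sum_eq sum_fin.
rewrite (esumID [set i] I f f0) (esumID [set i] I g g0) Ii_eq !esum_set1 ?f0 ?g0 //.
set Sf := esum _ f; set Sg := esum _ g => sum_eq sum_fin.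
have Sfg : Sf <= Sg by apply: le_esum => j [Ij _]; case/andP: (fg j Ij).
have Sf0 : 0 <= Sf by apply: esum_ge0 => j [Ij _]; exact: f0.
have Sg_fin : Sg \is a fin_num by move: sum_fin; rewrite fin_numD => /andP[].
have Sf_fin : Sf \is a fin_num.
  rewrite ge0_fin_numE //; apply: (le_lt_trans Sfg).
  by rewrite -ge0_fin_numE // (le_trans Sf0 Sfg).
case/andP: (fg i Ii) => _; rewrite le_eqVlt => /orP[/eqP //|fg_lt].
by have := lte_leD Sf_fin fg_lt Sfg; rewrite sum_eq ltxx.
Qed.

Section Regrouping.
Variables (R : realType) (Sigma : countType) (f : seq Sigma -> \bar R).
Hypothesis f_ge0 : forall v, 0 <= f v.

(* Words of length n+1 are the w.a with |w| = n. *)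
Lemma esum_words_rcons n :
  \esum_(v in [set v : seq Sigma | size v = n.+1]) f v =
  \esum_(w in [set w : seq Sigma | size w = n])
     \esum_(a in [set: Sigma]) f (rcons w a).
Proof.
rewrite (esum_esum (J := fun=> setT) (a := fun w a => f (rcons w a))) //.
apply: (reindex_esum _ _ (fun k => rcons k.1 k.2)); split.
- by move=> [v a] [/= h _]; rewrite /= size_rcons h.
- move=> [v a] [v' a'] _ _ /= /eqP; rewrite eqseq_rcons.
  by case/andP => /eqP -> /eqP ->.
- move=> v /= hv; case/lastP: v hv => [|v a] //=.
  by rewrite size_rcons => -[h]; exists (v, a).
Qed.

(* Words of length n+1 are the a.w with |w| = n. *)
Lemma esum_words_cons n :
  \esum_(v in [set v : seq Sigma | size v = n.+1]) f v =
  \esum_(w in [set w : seq Sigma | size w = n])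
     \esum_(a in [set: Sigma]) f (a :: w).
Proof.
rewrite (esum_esum (J := fun=> setT) (a := fun w a => f (a :: w))) //.
apply: (reindex_esum _ _ (fun k => k.2 :: k.1)); split.
- by move=> [v a] [/= h _]; rewrite /= h.
- by move=> [v a] [v' a'] _ _ /= [-> ->].
- by move=> [|a v] //= [h]; exists (v, a).
Qed.

Lemma esum_words0 :
  \esum_(w in [set w : seq Sigma | size w = 0%N]) f w = f [::].
Proof.
rewrite (_ : [set w | size w = 0%N] = [set [::]]) ?esum_set1 //.
by apply/seteqP; split => [w /size0nil ->|w ->].
Qed.

End Regrouping.

Theorem proposition2p2 (R : realType) (Sigma : countType) (x0 : Sigma)
  (mu : seq Sigma -> R) :
  prob_map mu ->
  (exists alpha : nat -> Sigma, mu_distributed mu alpha) ->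
  mu_invariant mu.
Proof.
move=> [mu_nil [mu_bnd mu_tot]] [alpha alpha_distr] w.
have mu_ge0 v : 0 <= (mu v)%:E by rewrite lee_fin; case/andP: (mu_bnd v).
have ext_ge0 (e : Sigma -> seq Sigma) : 0 <= \esum_(a in [set: Sigma]) (mu (e a))%:E.
  exact: esum_ge0.
case: (posnP (size w)) => [/size0nil -> | w_pos].
  rewrite mu_nil -(mu_tot 1%N isT); split.
  - by rewrite esum_words_rcons // (esum_words0 (fun v => ext_ge0 (rcons v))).
  - by rewrite esum_words_cons // (esum_words0 (fun v => ext_ge0 (cons^~ v))).
set n := size w; pose I := [set v : seq Sigma | size v = n].
have I_nil v : I v -> v != [::] by rewrite /I /= => vn; rewrite -size_eq0 vn -lt0n.
have total_n : \esum_(v in I) (mu v)%:E = 1 by exact: mu_tot.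
split.
- apply: (@esum_eq_of_le _ _ I (fun v => \esum_(a in [set: Sigma]) (mu (rcons v a))%:E)
    (fun v => (mu v)%:E) w); rewrite ?total_n //.
  + by move=> v /I_nil v0; rewrite ext_ge0 (mu_extensions_le alpha_distr v0).1.
  + by rewrite /I -(esum_words_rcons mu_ge0); exact: mu_tot.
- apply: (@esum_eq_of_le _ _ I (fun v => \esum_(a in [set: Sigma]) (mu (a :: v))%:E)
    (fun v => (mu v)%:E) w); rewrite ?total_n //.
  + by move=> v /I_nil v0; rewrite ext_ge0 (mu_extensions_le alpha_distr v0).2.
  + by rewrite /I -(esum_words_cons mu_ge0); exact: mu_tot.
Qed.
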